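(* Let $\mathcal W=\mathcal U\text{-}\sum_n\mathcal V_n$ be a sisnis ultrafilter on $\omega^2$. Then $\mathcal W$ has a basis consisting of sets in $\mathbb P$; that is, for every $A\in\mathcal W$ there is $B\subseteq A$ with $B\in\mathcal W\cap\mathbb P$.
   Context: Ultrafilters on countably infinite sets are assumed nonprincipal (containing all cofinite sets). An ultrafilter $\mathcal U$ on $\omega$ is selective if for every function $f$ on $\omega$ there is $A\in\mathcal U$ with $f\restriction A$ one-to-one or constant. For $A\subseteq\omega^2$ and $x\in\omega$, the (vertical) section is $A(x)=\{y\in\omega:\langle x,y\rangle\in A\}$. For ultrafilters $\mathcal U,\mathcal V_n$ on $\omega$, the sum $\mathcal U\text{-}\sum_n\mathcal V_n$ is the ultrafilter $\{A\subseteq\omega^2:\{n:A(n)\in\mathcal V_n\}\in\mathcal U\}$ on $\omega^2$. A sisnis ultrafilter is one of the form $\mathcal U\text{-}\sum_n\mathcal V_n$ where $\mathcal U$ and all $\mathcal V_n$ are selective ultrafilters on $\omega$ and, for $m\neq n$, there is no permutation $f$ of $\omega$ with $f(\mathcal V_m)=\mathcal V_n$ (here $f(\mathcal V)=\{B:f^{-1}(B)\in\mathcal V\}$). $\mathbb P$ is the set of all $A\subseteq\omega^2$ such that: (1) $A$ has infinitely many infinite sections and no nonempty finite sections; (2) the sections of $A$ are pairwise disjoint; (3) every $\langle x,y\rangle\in A$ has $x<y$; (4) for any $\langle x,y\rangle,\langle x',y'\rangle\in A$, $x\neq y'$. *)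

From Stdlib Require Import Arith.

Definition finite_set (S : nat -> Prop) : Prop :=
  exists N, forall m, S m -> m < N.
Definition infinite_set (S : nat -> Prop) : Prop := ~ finite_set S.

Definition is_ultrafilter {X : Type} (F : (X -> Prop) -> Prop) : Prop :=
  F (fun _ => True) /\
  ~ F (fun _ => False) /\
  (forall A B : X -> Prop, F A -> (forall x, A x -> B x) -> F B) /\
  (forall A B : X -> Prop, F A -> F B -> F (fun x => A x /\ B x)) /\
  (forall A : X -> Prop, F A \/ F (fun x => ~ A x)).

Definition nonprincipal_uf (U : (nat -> Prop) -> Prop) : Prop :=
  is_ultrafilter U /\
  (forall A : nat -> Prop, finite_set (fun n => ~ A n) -> U A).

Definition selective (U : (nat -> Prop) -> Prop) : Prop :=
  nonprincipal_uf U /\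
  forall f : nat -> nat, exists A : nat -> Prop, U A /\
    ((forall x y, A x -> A y -> f x = f y -> x = y) \/
     (forall x y, A x -> A y -> f x = f y)).

Definition bijective_nat (f : nat -> nat) : Prop :=
  (forall x y, f x = f y -> x = y) /\ (forall y, exists x, f x = y).

Definition image_uf (f : nat -> nat) (V : (nat -> Prop) -> Prop)
  : (nat -> Prop) -> Prop := fun B => V (fun x => B (f x)).

(* Subsets of omega^2 in curried form: A x y means <x,y> in A; A x is
   the vertical section A(x). *)
Definition uf_sum (U : (nat -> Prop) -> Prop) (V : nat -> (nat -> Prop) -> Prop)
  : (nat -> nat -> Prop) -> Prop :=
  fun A => U (fun n => V n (A n)).

Definition sisnis (U : (nat -> Prop) -> Prop) (V : nat -> (nat -> Prop) -> Prop) : Prop :=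
  selective U /\ (forall n, selective (V n)) /\
  (forall m n, m <> n ->
     ~ exists f, bijective_nat f /\
         (forall B : nat -> Prop, image_uf f (V m) B <-> V n B)).

Definition inP (A : nat -> nat -> Prop) : Prop :=
  infinite_set (fun x => infinite_set (A x)) /\
  (forall x, finite_set (A x) -> forall y, ~ A x y) /\
  (forall x x' y, x <> x' -> A x y -> A x' y -> False) /\
  (forall x y, A x y -> x < y) /\
  (forall x y x' y', A x y -> A x' y' -> x <> y').

(* Selective ultrafilters are P-points. Since the [V n] are pairwise distinct
   P-points, each [V n] contains a set [C n] whose complement lies in every
   other [V k]; since moreover [U] is a P-point and at most one [V n] equals
   [U], some [E] in [U] has its complement in [V n] for [U]-many [n]. Thinning
   [A] to the pairs [(n, y)] with [n] in [E], [y] outside [E], [n < y], [y] in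
   [C n] and in no [C m] for [m < n] stays in the sum, since each section
   is cut down by only finitely many sets of [V n]; and the result is in [P]. *)

From Stdlib Require Import Arith Lia Classical IndefiniteDescription.

Definition almost_sub (Y Z : nat -> Prop) : Prop :=
  finite_set (fun y => Y y /\ ~ Z y).

Definition ppoint (V : (nat -> Prop) -> Prop) : Prop :=
  forall X : nat -> nat -> Prop, (forall k, V (X k)) ->
    exists Y, V Y /\ forall k, almost_sub Y (X k).

Definition uf_equiv (V W : (nat -> Prop) -> Prop) : Prop :=
  forall B, V B <-> W B.

Lemma finite_subset (P Q : nat -> Prop) :
  (forall x, P x -> Q x) -> finite_set Q -> finite_set P.
Proof. intros H [N HN]. exists N. intros m Hm. apply HN, H, Hm. Qed.

Lemma almost_sub_compl (Y Z : nat -> Prop) :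
  almost_sub Y Z -> almost_sub (fun y => ~ Z y) (fun y => ~ Y y).
Proof.
  apply finite_subset. intros y [HZ HY]. split; [apply NNPP|]; assumption.
Qed.

Lemma finite_of_injective_bounded (f : nat -> nat) (k : nat) (P : nat -> Prop) :
  (forall x y, P x -> P y -> f x = f y -> x = y) ->
  (forall y, P y -> f y < k) -> finite_set P.
Proof.
  revert P. induction k as [|k IH]; intros P Hinj Hbound.
  - exists 0. intros m Hm. specialize (Hbound m Hm). lia.
  - destruct (classic (exists y0, P y0 /\ f y0 = k)) as [[y0 [Hy0 Hfy0]]|Hnone].
    + destruct (IH (fun y => P y /\ y <> y0)) as [N HN].
      * intros x y [Hx _] [Hy _]. apply Hinj; assumption.
      * intros y [Hy Hne]. specialize (Hbound y Hy).
        assert (f y <> k) by (intro e; apply Hne, Hinj; congruence). lia.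
      * exists (N + y0 + 1). intros m Hm.
        destruct (Nat.eq_dec m y0); [lia|]. specialize (HN m (conj Hm n)). lia.
    + apply IH; [exact Hinj|]. intros y Hy. specialize (Hbound y Hy).
      assert (f y <> k) by (intro e; apply Hnone; exists y; auto). lia.
Qed.

Section NonprincipalUltrafilter.

Variable V : (nat -> Prop) -> Prop.
Hypothesis HV : nonprincipal_uf V.

Lemma uf_true : V (fun _ => True).
Proof. exact (proj1 (proj1 HV)). Qed.

Lemma uf_not_false : ~ V (fun _ => False).
Proof. exact (proj1 (proj2 (proj1 HV))). Qed.

Lemma uf_mono (A B : nat -> Prop) : V A -> (forall x, A x -> B x) -> V B.
Proof. exact (proj1 (proj2 (proj2 (proj1 HV))) A B). Qed.

Lemma uf_and (A B : nat -> Prop) : V A -> V B -> V (fun x => A x /\ B x).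
Proof. exact (proj1 (proj2 (proj2 (proj2 (proj1 HV)))) A B). Qed.

Lemma uf_or_compl (A : nat -> Prop) : V A \/ V (fun x => ~ A x).
Proof. exact (proj2 (proj2 (proj2 (proj2 (proj1 HV)))) A). Qed.

Lemma uf_cofinite (A : nat -> Prop) : finite_set (fun n => ~ A n) -> V A.
Proof. exact (proj2 HV A). Qed.

Lemma uf_compl_false (A : nat -> Prop) : V A -> V (fun x => ~ A x) -> False.
Proof.
  intros H1 H2. apply uf_not_false.
  apply (uf_mono _ _ (uf_and _ _ H1 H2)). intros x [a b]. exact (b a).
Qed.

Lemma uf_compl_of_not (A : nat -> Prop) : ~ V A -> V (fun x => ~ A x).
Proof. intros H. destruct (uf_or_compl A); [contradiction|assumption]. Qed.

Lemma uf_exists (A : nat -> Prop) : V A -> exists x, A x.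
Proof.
  intros H. apply NNPP. intro Hnone. apply uf_not_false.
  apply (uf_mono _ _ H). intros x Hx. apply Hnone. exists x. exact Hx.
Qed.

Lemma uf_infinite (A : nat -> Prop) : V A -> infinite_set A.
Proof.
  intros H Hfin. apply (uf_compl_false A H). apply uf_cofinite.
  apply (finite_subset _ _ (fun x h => NNPP _ h) Hfin).
Qed.

Lemma uf_almost_sub (Y Z : nat -> Prop) : V Y -> almost_sub Y Z -> V Z.
Proof.
  intros HY Hfin.
  assert (HC : V (fun y => ~ (Y y /\ ~ Z y))).
  { apply uf_cofinite. apply (finite_subset _ _ (fun y h => NNPP _ h) Hfin). }
  apply (uf_mono _ _ (uf_and _ _ HY HC)).
  intros y [H1 H2]. apply NNPP. intro H3. apply H2. split; assumption.
Qed.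

Lemma uf_bounded_forall (G : nat -> nat -> Prop) (n : nat) :
  (forall m, m < n -> V (G m)) -> V (fun y => forall m, m < n -> G m y).
Proof.
  induction n as [|n IH]; intros H.
  - apply (uf_mono _ _ uf_true). intros y _ m Hm. lia.
  - assert (Hlt : V (fun y => forall m, m < n -> G m y))
      by (apply IH; intros m Hm; apply H; lia).
    apply (uf_mono _ _ (uf_and _ _ Hlt (H n (Nat.lt_succ_diag_r n)))).
    intros y [H1 H2] m Hm.
    destruct (Nat.eq_dec m n) as [->|Hne]; [exact H2 | apply H1; lia].
Qed.

End NonprincipalUltrafilter.

Lemma uf_equiv_of_incl (V W : (nat -> Prop) -> Prop) :
  nonprincipal_uf V -> nonprincipal_uf W ->
  (forall B, W B -> V B) -> uf_equiv V W.
Proof.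
  intros HV HW Hincl B. split; [|apply Hincl]. intros HB.
  destruct (uf_or_compl W HW B) as [H|H]; [exact H|].
  exfalso. exact (uf_compl_false V HV B HB (Hincl _ H)).
Qed.

Lemma uf_separate (V W : (nat -> Prop) -> Prop) :
  nonprincipal_uf V -> nonprincipal_uf W -> ~ uf_equiv V W ->
  exists T, V T /\ W (fun y => ~ T y).
Proof.
  intros HV HW Hne. apply NNPP. intros Hnone. apply Hne.
  apply (uf_equiv_of_incl V W HV HW). intros B HB. apply NNPP. intros HnB.
  apply Hnone. exists (fun y => ~ B y). split.
  - exact (uf_compl_of_not V HV B HnB).
  - apply (uf_mono W HW B); [exact HB|]. intros y Hy Hn. exact (Hn Hy).
Qed.

(* With [f y] the first index [k] such that [y] is not in [X k] (and [0] if
   there is none), a set on which [f] is injective works, while a set on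
   which [f] is constant [c] meets [X c] only in points of every [X k]. *)
Lemma selective_ppoint (V : (nat -> Prop) -> Prop) : selective V -> ppoint V.
Proof.
  intros [HV Hsel] X HX.
  assert (Hf : exists f : nat -> nat, forall y, (exists j, ~ X j y) ->
            ~ X (f y) y /\ forall j, ~ X j y -> f y <= j).
  { apply (functional_choice (fun y k => (exists j, ~ X j y) ->
                                 ~ X k y /\ forall j, ~ X j y -> k <= j)).
    intros y. destruct (classic (exists j, ~ X j y)) as [Hout|Hin].
    - destruct (dec_inh_nat_subset_has_unique_least_element
                  (fun j => ~ X j y) (fun j => classic _) Hout) as [k [Hk _]].
      exists k. intros _. exact Hk.
    - exists 0. intros H. contradiction. }
  destruct Hf as [f Hf].
  destruct (Hsel f) as [Y [HY [Hinj|Hconst]]].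
  - exists Y. split; [exact HY|]. intros k.
    apply (finite_of_injective_bounded f (S k)).
    + intros x y [Hx _] [Hy _]. apply Hinj; assumption.
    + intros y [_ Hk]. pose proof (proj2 (Hf y (ex_intro _ k Hk)) k Hk). lia.
  - destruct (uf_exists V HV Y HY) as [y0 Hy0].
    exists (fun y => Y y /\ X (f y0) y). split.
    + apply (uf_and V HV); [exact HY|]. apply (uf_mono V HV _ _ (HX (f y0))).
      trivial.
    + intros k. exists 0. intros y [[Hy HXy] HnX]. exfalso.
      rewrite (Hconst y0 y Hy0 Hy) in HXy.
      exact (proj1 (Hf y (ex_intro _ k HnX)) HXy).
Qed.

Section PointsOfSum.

Variable V : nat -> (nat -> Prop) -> Prop.
Hypothesis HV : forall n, nonprincipal_uf (V n).
Hypothesis Hinj : forall m n, uf_equiv (V m) (V n) -> m = n.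

Lemma exists_separating_sets :
  (forall n, ppoint (V n)) ->
  exists C : nat -> nat -> Prop,
    forall n, V n (C n) /\ forall k, k <> n -> V k (fun y => ~ C n y).
Proof.
  intros Hpp.
  assert (HT : forall n, exists T : nat -> nat -> Prop, forall k,
             V n (T k) /\ (k <> n -> V k (fun y => ~ T k y))).
  { intros n. apply (functional_choice (fun k T =>
      V n T /\ (k <> n -> V k (fun y => ~ T y)))). intros k.
    destruct (Nat.eq_dec k n) as [->|Hne].
    - exists (fun _ => True). split; [apply uf_true, HV | congruence].
    - destruct (uf_separate (V n) (V k) (HV n) (HV k)) as [T HT].
      + intros He. apply Hne. symmetry. exact (Hinj n k He).
      + exists T. split; [|intros _]; apply HT. }
  apply (functional_choice (fun n Cn =>
    V n Cn /\ forall k, k <> n -> V k (fun y => ~ Cn y))). intros n.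
  destruct (HT n) as [T HTn].
  destruct (Hpp n T (fun k => proj1 (HTn k))) as [Cn [HCn HCna]].
  exists Cn. split; [exact HCn|]. intros k Hne.
  apply (uf_almost_sub (V k) (HV k) _ _ (proj2 (HTn k) Hne)).
  exact (almost_sub_compl _ _ (HCna k)).
Qed.

(* For [n] with [V n] different from [U], some [F n] in [U] has its
   complement in [V n]; a pseudo-intersection [E] of the [F n] inherits this,
   and only one [n] can have [V n] equal to [U]. *)
Lemma exists_set_avoided (U : (nat -> Prop) -> Prop) :
  nonprincipal_uf U -> ppoint U ->
  exists E, U E /\ U (fun n => V n (fun y => ~ E y)).
Proof.
  intros HU Hpp.
  assert (HF : exists F : nat -> nat -> Prop, forall n, U (F n) /\
             ((exists G, U G /\ V n (fun y => ~ G y)) -> V n (fun y => ~ F n y))).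
  { apply (functional_choice (fun n Fn => U Fn /\
      ((exists G, U G /\ V n (fun y => ~ G y)) -> V n (fun y => ~ Fn y)))).
    intros n. destruct (classic (exists G, U G /\ V n (fun y => ~ G y))) as [[G HG]|Hnone].
    - exists G. split; [|intros _]; apply HG.
    - exists (fun _ => True). split; [apply uf_true, HU | contradiction]. }
  destruct HF as [F HF].
  destruct (Hpp F (fun n => proj1 (HF n))) as [E [HE HEa]].
  exists E. split; [exact HE|].
  destruct (uf_or_compl U HU (fun n => V n (fun y => ~ E y))) as [Hgood|Hbad];
    [exact Hgood|exfalso].
  assert (Hequiv : forall n, ~ V n (fun y => ~ E y) -> uf_equiv (V n) U).
  { intros n Hn. apply (uf_equiv_of_incl _ _ (HV n) HU). intros G HG.
    apply NNPP. intros HnG. apply Hn.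
    apply (uf_almost_sub (V n) (HV n) (fun y => ~ F n y)).
    - apply (proj2 (HF n)). exists G. split; [exact HG|].
      exact (uf_compl_of_not _ (HV n) G HnG).
    - exact (almost_sub_compl _ _ (HEa n)). }
  destruct (uf_exists U HU _ Hbad) as [n0 Hn0].
  assert (Htwo : U (fun m => ~ V m (fun y => ~ E y) /\ m <> n0)).
  { apply (uf_and U HU _ _ Hbad). apply (uf_cofinite U HU).
    exists (S n0). intros m Hm. apply NNPP in Hm. lia. }
  destruct (uf_exists U HU _ Htwo) as [m0 [Hm0 Hne]].
  apply Hne, Hinj. intros B.
  rewrite (Hequiv m0 Hm0 B), (Hequiv n0 Hn0 B). tauto.
Qed.

End PointsOfSum.

Section SumBasis.

Variable U : (nat -> Prop) -> Prop.
Variable V : nat -> (nat -> Prop) -> Prop.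
Hypothesis HU : nonprincipal_uf U.
Hypothesis HV : forall n, nonprincipal_uf (V n).
Variables (A C : nat -> nat -> Prop) (E : nat -> Prop).
Hypothesis HC : forall n, V n (C n) /\ forall k, k <> n -> V k (fun y => ~ C n y).

Definition good_index (n : nat) : Prop :=
  V n (A n) /\ E n /\ V n (fun y => ~ E y).

Definition basis_set (n y : nat) : Prop :=
  good_index n /\ A n y /\ C n y /\ n < y /\ ~ E y /\
  (forall m, m < n -> ~ C m y).

Lemma basis_set_section (n : nat) : good_index n -> V n (basis_set n).
Proof.
  intros Hn. pose proof Hn as [HA [_ HnE]].
  apply (uf_mono _ (HV n) (fun y => A n y /\ C n y /\ n < y /\ ~ E y /\
                                    (forall m, m < n -> ~ C m y))).
  2: { intros y Hy. split; assumption. }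
  apply (uf_and _ (HV n)); [exact HA|].
  apply (uf_and _ (HV n)); [exact (proj1 (HC n))|].
  apply (uf_and _ (HV n)).
  { apply (uf_cofinite _ (HV n)). exists (S n). intros m Hm. lia. }
  apply (uf_and _ (HV n)); [exact HnE|].
  apply (uf_bounded_forall _ (HV n) (fun m y => ~ C m y)).
  intros m Hm. apply (proj2 (HC m)). lia.
Qed.

Lemma basis_set_in_P : U good_index -> inP basis_set.
Proof.
  intros Hgood. repeat split.
  - intros Hfin. apply (uf_infinite U HU good_index Hgood).
    apply (finite_subset _ _ (fun x Hx => uf_infinite _ (HV x) _ (basis_set_section x Hx))).
    exact Hfin.
  - intros x Hfin y [Hx _]. exact (uf_infinite _ (HV x) _ (basis_set_section x Hx) Hfin).
  - intros x x' y Hne (_ & _ & HCx & _ & _ & Hx) (_ & _ & HCx' & _ & _ & Hx').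
    destruct (Nat.lt_total x x') as [Hlt|[Heq|Hlt]].
    + exact (Hx' x Hlt HCx).
    + contradiction.
    + exact (Hx x' Hlt HCx').
  - intros x y (_ & _ & _ & Hlt & _). exact Hlt.
  - intros x y x' y' ((_ & HEx & _) & _) (_ & _ & _ & _ & HnEy' & _) Heq.
    apply HnEy'. rewrite <- Heq. exact HEx.
Qed.

End SumBasis.

Lemma sisnis_injective (U : (nat -> Prop) -> Prop) (V : nat -> (nat -> Prop) -> Prop) :
  sisnis U V -> forall m n, uf_equiv (V m) (V n) -> m = n.
Proof.
  intros [_ [_ Hnoniso]] m n Heq. apply NNPP. intros Hne. apply (Hnoniso m n Hne).
  exists (fun x => x). repeat split; [auto | intros y; exists y; reflexivity | |];
    apply Heq.
Qed.

Theorem mainTheorem1 :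
  forall (U : (nat -> Prop) -> Prop) (V : nat -> (nat -> Prop) -> Prop),
    sisnis U V ->
    forall A : nat -> nat -> Prop, uf_sum U V A ->
      exists B : nat -> nat -> Prop,
        (forall x y, B x y -> A x y) /\ uf_sum U V B /\ inP B.
Proof.
  intros U V Hsisnis A HA.
  pose proof Hsisnis as [HUsel [HVsel _]].
  assert (HU : nonprincipal_uf U) by exact (proj1 HUsel).
  assert (HV : forall n, nonprincipal_uf (V n)) by (intros n; exact (proj1 (HVsel n))).
  pose proof (sisnis_injective U V Hsisnis) as Hinj.
  destruct (exists_separating_sets V HV Hinj (fun n => selective_ppoint _ (HVsel n)))
    as [C HC].
  destruct (exists_set_avoided V HV Hinj U HU (selective_ppoint U HUsel))
    as [E [HE HnE]].
  assert (Hgood : U (good_index V A E)).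
  { apply (uf_and U HU); [exact HA|]. apply (uf_and U HU); assumption. }
  exists (basis_set V A C E). split; [|split].
  - intros x y (_ & HAxy & _). exact HAxy.
  - apply (uf_mono U HU _ _ Hgood). exact (basis_set_section V HV A C E HC).
  - exact (basis_set_in_P U V HU HV A C E HC Hgood).
Qed.
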